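(* For $j=1,2,3,4$ let $\mathcal{S}_j\subset\partial H^2_\mathbb{C}$ be the spinal sphere of $\gamma_j$. Then, for $k\in\mathbb{Z}$: $\mathcal{S}_1\cap G_1^k\mathcal{S}_1\neq\emptyset$ only if $-2\le k\le2$; $\mathcal{S}_1\cap G_1^k\mathcal{S}_2\neq\emptyset$ only if $-4\le k\le1$; $\mathcal{S}_1\cap G_1^k\mathcal{S}_3\neq\emptyset$ only if $-3\le k\le1$; $\mathcal{S}_1\cap G_1^k\mathcal{S}_4\neq\emptyset$ only if $-4\le k\le0$; $\mathcal{S}_2\cap G_1^k\mathcal{S}_2\neq\emptyset$ only if $-2\le k\le2$; $\mathcal{S}_2\cap G_1^k\mathcal{S}_3\neq\emptyset$ only if $-2\le k\le2$; $\mathcal{S}_2\cap G_1^k\mathcal{S}_4\neq\emptyset$ only if $-2\le k\le2$; $\mathcal{S}_3\cap G_1^k\mathcal{S}_3\neq\emptyset$ only if $-2\le k\le2$; $\mathcal{S}_3\cap G_1^k\mathcal{S}_4\neq\emptyset$ only if $-2\le k\le1$; $\mathcal{S}_4\cap G_1^k\mathcal{S}_4\neq\emptyset$ only if $-2\le k\le2$.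
   Context: Hermitian form on $\mathbb{C}^3$: $\langle V,W\rangle=V_1\overline{W_3}+V_2\overline{W_2}+V_3\overline{W_1}$; $\partial H^2_\mathbb{C}$ is the set of null complex lines. Let $$G_1=\begin{pmatrix}1&1&-\frac{1+i\sqrt7}{2}\\0&1&-1\\0&0&1\end{pmatrix},\quad G_3=\begin{pmatrix}1&0&0\\-1&1&0\\ \frac{-1+i\sqrt7}{2}&1&1\end{pmatrix},\quad G_2=G_3G_1^{-1}G_3^{-1}G_1,$$ $Q=(1,0,0)^T$, and $\gamma_1=G_2,\gamma_2=G_2^{-1},\gamma_3=G_3,\gamma_4=G_3^{-1}$. The spinal sphere of a matrix $G$ (with $GQ$ not proportional to $Q$) is $\{[Z]\in\partial H^2_\mathbb{C}: |\langle Z,Q\rangle|=|\langle Z,GQ\rangle|\}$, the boundary at infinity of the bisector $|\langle Z,Q\rangle|=|\langle Z,GQ\rangle|$. $G_1^k\mathcal{S}_j$ denotes the image of $\mathcal{S}_j$ under $G_1^k$. *)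

(* complex numbers are modelled by algC (algebraic complex numbers),
   which contains sqrt 7 and the imaginary unit. *)
From HB Require Import structures.
From mathcomp Require Import all_boot all_order all_algebra all_field.
Set Implicit Arguments. Unset Strict Implicit. Unset Printing Implicit Defensive.
Import Order.TTheory GRing.Theory Num.Theory.
Local Open Scope ring_scope.

Definition mx3 (a b c d e f g h k : algC) : 'M[algC]_3 :=
  \matrix_(i < 3, j < 3)
     nth 0 (nth [::] [:: [:: a; b; c]; [:: d; e; f]; [:: g; h; k]] i) j.

(* Hermitian form <V,W> = V1 conj(W3) + V2 conj(W2) + V3 conj(W1) *)
Definition herm (V W : 'cV[algC]_3) : algC :=
  \sum_(i < 3) V i 0 * (W (rev_ord i) 0)^*.

Definition omega : algC := (1 + 'i * sqrtC 7%:R) / 2%:R.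

Definition G1 : 'M[algC]_3 := mx3 1 1 (- omega)  0 1 (-1)  0 0 1.
Definition G3 : 'M[algC]_3 := mx3 1 0 0  (-1) 1 0  ((-1 + 'i * sqrtC 7%:R) / 2%:R) 1 1.
Definition G2 : 'M[algC]_3 := G3 *m invmx G1 *m invmx G3 *m G1.

Definition Q : 'cV[algC]_3 := \col_(i < 3) (if i == ord0 then 1 else 0).

Definition gamma1 := G2.
Definition gamma2 := invmx G2.
Definition gamma3 := G3.
Definition gamma4 := invmx G3.

(* A point of the boundary of complex hyperbolic 2-space is a null complex line;
   we represent it by any nonzero null vector spanning it (all conditions below
   are invariant under rescaling the representative). *)
Definition null_vec (Z : 'cV[algC]_3) : Prop := Z != 0 /\ herm Z Z = 0.

Definition spinal_sphere (G : 'M[algC]_3) (Z : 'cV[algC]_3) : Prop :=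
  null_vec Z /\ `|herm Z Q| = `|herm Z (G *m Q)|.

Definition G1pow (k : int) : 'M[algC]_3 :=
  match k with
  | Posz n => G1 ^+ n
  | Negz n => invmx G1 ^+ n.+1
  end.

Definition meets (Gi Gj : 'M[algC]_3) (k : int) : Prop :=
  exists Z, spinal_sphere Gi Z /\
    exists W, spinal_sphere Gj W /\ Z = G1pow k *m W.

(* Send Q to infinity: a null vector Z with Z3 <> 0 then has the horizontal
   Heisenberg coordinate Z2/Z3, on which G1^k acts by the translation -k.  For
   null Z and W the identity |Z2/Z3 - W2/W3|^2 = -2 Re(<Z,W> / (Z3 conj W3))
   shows that the spinal sphere of G projects into the disc of radius
   sqrt (2 / |g3|) about g2/g3, where GQ = (g1, g2, g3).  For the four gammas the
   centres have real parts 3/2, 0, 1/4, -1/4 and the radii are sqrt 2, sqrt 2,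
   2^(1/4), 2^(1/4), bounded by 99/70 and 25/21.  Hence S_i can meet G1^k S_j
   only if k differs from Re c_j - Re c_i by at most the sum of the radii. *)

From HB Require Import structures.
From mathcomp Require Import all_boot all_order all_algebra all_field.
From mathcomp Require Import ring lra zify.
Set Implicit Arguments. Unset Strict Implicit. Unset Printing Implicit Defensive.
Import Order.TTheory GRing.Theory Num.Theory.
Local Open Scope ring_scope.

Definition col3 (a b c : algC) : 'cV[algC]_3 := \col_(i < 3) nth 0 [:: a; b; c] i.

Lemma col3E (V : 'cV[algC]_3) :
  V = col3 (V ord0 ord0) (V (inord 1%N) ord0) (V (inord 2%N) ord0).
Proof.
apply/matrixP=> i j; rewrite !mxE ord1.
by case: i => [[|[|[|?]]] Hi] //=; congr (V _ _); apply: val_inj; rewrite /= ?inordK.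
Qed.

Lemma col3_eq0 (a b c : algC) : (col3 a b c == 0) = [&& a == 0, b == 0 & c == 0].
Proof.
apply/eqP/and3P => [E | [/eqP-> /eqP-> /eqP->]].
- have entry i : col3 a b c i ord0 = 0 by rewrite E mxE.
  move: (entry ord0) (entry (inord 1%N)) (entry (inord 2%N)).
  by rewrite !mxE !inordK //= => -> -> ->; rewrite eqxx.
- by apply/matrixP=> i j; rewrite !mxE; case: i => [[|[|[|?]]] Hi].
Qed.

Lemma mx3_mul a b c d e f g h k a' b' c' d' e' f' g' h' k' :
  mx3 a b c d e f g h k *m mx3 a' b' c' d' e' f' g' h' k' =
  mx3 (a*a'+b*d'+c*g') (a*b'+b*e'+c*h') (a*c'+b*f'+c*k')
      (d*a'+e*d'+f*g') (d*b'+e*e'+f*h') (d*c'+e*f'+f*k')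
      (g*a'+h*d'+k*g') (g*b'+h*e'+k*h') (g*c'+h*f'+k*k').
Proof.
apply/matrixP=> i j; rewrite !mxE !big_ord_recl big_ord0 !mxE.
by case: i => [[|[|[|?]]] Hi] //=; case: j => [[|[|[|?]]] Hj] //=; ring.
Qed.

Lemma mx3_col a b c d e f g h k x y z :
  mx3 a b c d e f g h k *m col3 x y z =
  col3 (a*x+b*y+c*z) (d*x+e*y+f*z) (g*x+h*y+k*z).
Proof.
apply/matrixP=> i j; rewrite !mxE !big_ord_recl big_ord0 !mxE.
by case: i => [[|[|[|?]]] Hi] //=; ring.
Qed.

Lemma mx3_1 : (1%:M : 'M[algC]_3) = mx3 1 0 0 0 1 0 0 0 1.
Proof.
apply/matrixP=> i j; rewrite !mxE.
by case: i => [[|[|[|?]]] Hi] //=; case: j => [[|[|[|?]]] Hj].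
Qed.

Lemma herm_col3 a b c x y z :
  herm (col3 a b c) (col3 x y z) = a * z^* + b * y^* + c * x^*.
Proof. by rewrite /herm !big_ord_recl big_ord0 !mxE /=; ring. Qed.

Lemma Q_col3 : Q = col3 1 0 0.
Proof. by apply/matrixP=> i j; rewrite !mxE; case: i => [[|[|[|?]]] Hi]. Qed.

Lemma invmx_eq {R : comUnitRingType} {n} {A B : 'M[R]_n} : A *m B = 1%:M -> invmx A = B.
Proof.
move=> AB; have [uA _] := mulmx1_unit AB.
by rewrite -[invmx A]mulmx1 -AB mulmxA mulVmx // mul1mx.
Qed.

Lemma unitriangular_exp_col (a b c x y z : algC) n :
  exists t, mx3 1 a b 0 1 c 0 0 1 ^+ n *m col3 x y z = col3 t (y + n%:R * c * z) z.
Proof.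
elim: n x y => [|n IHn] x y.
  by exists x; rewrite expr0 -idmxE mul1mx; congr col3; ring.
have [t Et] := IHn (x + a * y + b * z) (y + c * z).
exists t; rewrite exprSr -mulmxE -mulmxA.
have -> : mx3 1 a b 0 1 c 0 0 1 *m col3 x y z = col3 (x + a * y + b * z) (y + c * z) z.
  by rewrite mx3_col; congr col3; ring.
by rewrite Et mulrSr; congr col3; ring.
Qed.

Lemma conjC_omega : omega^* = 1 - omega.
Proof.
have s7_real : (sqrtC 7%:R : algC)^* = sqrtC 7%:R.
  by apply: conj_Creal; apply: ger0_real; rewrite sqrtC_ge0 ler0n.
rewrite /omega fmorph_div rmorphD rmorphM /= rmorph1 rmorph_nat conjCi s7_real.
by field.
Qed.

Lemma omega_sqr : omega ^+ 2 = omega - 2.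
Proof.
have s7 : (sqrtC 7%:R : algC) ^+ 2 = 7%:R by rewrite sqrtCK.
have i2 : ('i : algC) ^+ 2 = -1 by rewrite sqrCi.
by rewrite /omega; field: s7 i2.
Qed.

Lemma omega_neq0 : omega != 0.
Proof.
apply: contra_eq_neq omega_sqr => ->.
by rewrite expr0n /= sub0r eq_sym oppr_eq0 pnatr_eq0.
Qed.

Lemma omega_neq1 : omega - 1 != 0.
Proof.
rewrite subr_eq0; apply: contra_eq_neq omega_sqr => ->.
by rewrite expr1n -subr_eq0 opprB addrC subrK pnatr_eq0.
Qed.

Lemma Re_real_omega (x y : algC) :
  x \is Num.real -> y \is Num.real -> 'Re (x + y * omega) = x + y / 2.
Proof.
move=> x_real y_real.
rewrite ReE rmorphD rmorphM /= (conj_Creal x_real) (conj_Creal y_real) conjC_omega.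
by field.
Qed.

Lemma G3_mx3 : G3 = mx3 1 0 0 (-1) 1 0 (omega - 1) 1 1.
Proof. by rewrite /G3 /omega; congr mx3; field. Qed.

Lemma G1_mulmx_inv : G1 *m mx3 1 (-1) (omega - 1) 0 1 1 0 0 1 = 1%:M.
Proof. by rewrite mx3_mul mx3_1; congr mx3; ring. Qed.

Lemma G3_mulmx_inv : G3 *m mx3 1 0 0 1 1 0 (- omega) (-1) 1 = 1%:M.
Proof. by rewrite G3_mx3 mx3_mul mx3_1; congr mx3; ring. Qed.

Lemma G1_unit : G1 \in unitmx. Proof. exact: (mulmx1_unit G1_mulmx_inv).1. Qed.
Lemma G3_unit : G3 \in unitmx. Proof. exact: (mulmx1_unit G3_mulmx_inv).1. Qed.

Lemma invmx_G2 : invmx G2 = invmx G1 *m G3 *m G1 *m invmx G3.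
Proof.
apply: invmx_eq; rewrite /G2 !mulmxA (mulmxK G1_unit) (mulmxKV G3_unit).
by rewrite (mulmxKV G1_unit) (mulmxV G3_unit).
Qed.

Lemma gamma1_Q : gamma1 *m Q = col3 2 (-1 - omega) (-1).
Proof.
rewrite /gamma1 /G2 (invmx_eq G1_mulmx_inv) (invmx_eq G3_mulmx_inv) Q_col3.
rewrite -!mulmxA /G1 G3_mx3 !mx3_col; congr col3; ring: omega_sqr.
Qed.

Lemma gamma2_Q : gamma2 *m Q = col3 0 0 (-1).
Proof.
rewrite /gamma2 invmx_G2 (invmx_eq G1_mulmx_inv) (invmx_eq G3_mulmx_inv) Q_col3.
rewrite -!mulmxA /G1 G3_mx3 !mx3_col; congr col3; ring: omega_sqr.
Qed.

Lemma gamma3_Q : gamma3 *m Q = col3 1 (-1) (omega - 1).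
Proof. by rewrite /gamma3 G3_mx3 Q_col3 mx3_col; congr col3; ring. Qed.

Lemma gamma4_Q : gamma4 *m Q = col3 1 1 (- omega).
Proof. by rewrite /gamma4 (invmx_eq G3_mulmx_inv) Q_col3 mx3_col; congr col3; ring. Qed.

Lemma G1pow_col k x y z :
  exists t, G1pow k *m col3 x y z = col3 t (y - k%:~R * z) z.
Proof.
case: k => n /=.
  have [t ->] := unitriangular_exp_col 1 (- omega) (-1) x y z n.
  by exists t; congr col3; ring.
rewrite (invmx_eq G1_mulmx_inv).
have [t ->] := unitriangular_exp_col (-1) (omega - 1) 1 x y z n.+1.
by exists t; rewrite NegzE mulrNz; congr col3; ring.
Qed.

Lemma norm_horizontal_null z1 z2 z3 w1 w2 w3 :
  z3 != 0 -> w3 != 0 ->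
  herm (col3 z1 z2 z3) (col3 z1 z2 z3) = 0 -> herm (col3 w1 w2 w3) (col3 w1 w2 w3) = 0 ->
  `|z2 / z3 - w2 / w3| ^+ 2 =
    - 2 * 'Re (herm (col3 z1 z2 z3) (col3 w1 w2 w3) / (z3 * w3^*)).
Proof.
rewrite !herm_col3 => z3_neq0 w3_neq0 nullZ nullW.
have z3c_neq0 : z3^* != 0 by rewrite conjC_eq0.
have w3c_neq0 : w3^* != 0 by rewrite conjC_eq0.
rewrite normCK ReE !(rmorphB, rmorphD, rmorphM, fmorphV) /= !conjCK.
apply/eqP; rewrite -subr_eq0; apply/eqP.
(* The difference is a combination of the two nullity relations. *)
transitivity ((w3 * w3^* * (z1 * z3^* + z2 * z2^* + z3 * z1^*) +
               z3 * z3^* * (w1 * w3^* + w2 * w2^* + w3 * w1^*)) / (z3 * z3^* * w3 * w3^*)).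
  by field; rewrite z3_neq0 w3_neq0 z3c_neq0 w3c_neq0.
by rewrite nullZ nullW !mulr0 addr0 mul0r.
Qed.

Section SpinalSphere.
Variables (G : 'M[algC]_3) (g1 g2 g3 : algC).
Hypotheses (GQ : G *m Q = col3 g1 g2 g3) (g3_neq0 : g3 != 0).

Lemma spinal_sphereE z1 z2 z3 :
  spinal_sphere G (col3 z1 z2 z3) <->
  [/\ col3 z1 z2 z3 != 0, herm (col3 z1 z2 z3) (col3 z1 z2 z3) = 0 &
      `|z3| = `|herm (col3 z1 z2 z3) (col3 g1 g2 g3)|].
Proof.
rewrite /spinal_sphere /null_vec GQ Q_col3 !herm_col3 conjC0 conjC1 !mulr0 !add0r mulr1.
by split=> [[[]]|[]].
Qed.

Lemma spinal_sphere_third_neq0 z1 z2 z3 : spinal_sphere G (col3 z1 z2 z3) -> z3 != 0.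
Proof.
case/spinal_sphereE=> Z_neq0 nullZ eq_norm; apply: contra_neq Z_neq0 => z3_0.
move: nullZ eq_norm; rewrite !herm_col3 z3_0 conjC0 !mulr0 mul0r !addr0 add0r normr0.
move/eqP; rewrite mul_conjC_eq0 => /eqP z2_0 /esym/eqP.
rewrite z2_0 !mul0r !addr0 normr_eq0 mulf_eq0 conjC_eq0 (negbTE g3_neq0) orbF => /eqP z1_0.
by apply/eqP; rewrite col3_eq0 z1_0 !eqxx.
Qed.

Hypothesis nullG : herm (col3 g1 g2 g3) (col3 g1 g2 g3) = 0.

Lemma spinal_sphere_horizontal_le z1 z2 z3 : spinal_sphere G (col3 z1 z2 z3) ->
  `|z2 / z3 - g2 / g3| ^+ 2 <= 2 / `|g3|.
Proof.
move=> SZ; have z3_neq0 := spinal_sphere_third_neq0 SZ.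
case/spinal_sphereE: SZ => _ nullZ eq_norm.
set u := herm (col3 z1 z2 z3) (col3 g1 g2 g3) / (z3 * g3^*).
have norm_u : `|u| = `|g3|^-1.
  rewrite /u normrM normfV normrM -eq_norm norm_conjC invfM mulrA divff ?mul1r //.
  by rewrite normr_eq0.
rewrite (@norm_horizontal_null z1 _ _ g1) // mulNr -mulrN -raddfN /= -norm_u.
rewrite ler_pM2l ?ltr0n //.
by rewrite -(normrN u) (leif_Re_Creal (- u)).1.
Qed.

End SpinalSphere.

Definition in_slab (G : 'M[algC]_3) (rho a : rat) : Prop :=
  forall z1 z2 z3, spinal_sphere G (col3 z1 z2 z3) ->
    z3 != 0 /\ `|'Re (z2 / z3) - ratr rho| <= ratr a.

Lemma spinal_sphere_in_slab G g1 g2 g3 rho a :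
  G *m Q = col3 g1 g2 g3 -> g3 != 0 -> herm (col3 g1 g2 g3) (col3 g1 g2 g3) = 0 ->
  'Re (g2 / g3) = ratr rho -> 0 <= a -> 2 / `|g3| <= ratr a ^+ 2 -> in_slab G rho a.
Proof.
move=> GQ g3_neq0 nullG Re_g a_ge0 radius; rewrite /in_slab => z1 z2 z3 SZ.
split; first exact: (spinal_sphere_third_neq0 GQ g3_neq0 SZ).
rewrite -Re_g -raddfB /=; apply: (le_trans (leif_normC_Re_Creal _).1).
rewrite -(ler_pXn2r (_ : 0 < 2)%N) ?nnegrE ?ler0q ?normr_ge0 //.
exact: (le_trans (spinal_sphere_horizontal_le GQ g3_neq0 nullG SZ)).
Qed.

Lemma two_div_norm_le (g : algC) (m : nat) (a : rat) :
  `|g| ^+ 2 = m%:R -> 4 <= a ^+ 4 * m%:R -> 2 / `|g| <= ratr a ^+ 2.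
Proof.
move=> norm_g bound.
have m_gt0 : (0 < m)%N by rewrite lt0n; apply: contraTneq bound => ->; rewrite mulr0.
have lhs_ge0 : 0 <= 2 / `|g| by rewrite divr_ge0 ?ler0n ?normr_ge0.
rewrite -rmorphXn -(ler_pXn2r (_ : 0 < 2)%N) ?nnegrE ?ler0q ?sqr_ge0 //.
rewrite expr_div_n norm_g ler_pdivrMr ?ltr0n //.
have -> : ratr (a ^+ 2) ^+ 2 * m%:R = ratr (a ^+ 4 * m%:R) :> algC.
  by rewrite [RHS]rmorphM rmorph_nat !(rmorphXn _ _ a) -exprM.
have -> : 2 ^+ 2 = ratr 4 :> algC by rewrite rmorph_nat expr2 -natrM.
by rewrite ler_rat.
Qed.

Lemma meets_slab_dist Gi Gj ri rj ai aj k :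
  in_slab Gi ri ai -> in_slab Gj rj aj -> meets Gi Gj k -> `|rj - ri - k%:~R| <= ai + aj.
Proof.
move=> slab_i slab_j [Z [SZ [W [SW EZ]]]].
rewrite [W]col3E in SW EZ.
have [t Et] := G1pow_col k (W ord0 ord0) (W (inord 1%N) ord0) (W (inord 2%N) ord0).
move: SW SZ; rewrite EZ Et.
set w2 := W (inord 1%N) ord0; set w3 := W (inord 2%N) ord0 => SW SZ.
have [w3_neq0 near_j] := slab_j _ _ _ SW; have [_ near_i] := slab_i _ _ _ SZ.
have shift : 'Re ((w2 - k%:~R * w3) / w3) = 'Re (w2 / w3) - k%:~R.
  by rewrite mulrBl mulfK // raddfB /=; congr (_ - _); apply/Creal_ReP/Rreal_int.
rewrite -(ler_rat algC) ratr_norm rmorphD rmorphB rmorphN rmorph_int rmorphD /=.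
have -> : ratr rj - ratr ri - k%:~R =
    (ratr rj - 'Re (w2 / w3)) - (ratr ri - 'Re ((w2 - k%:~R * w3) / w3)) :> algC.
  by rewrite shift; ring.
apply: (le_trans (ler_normB _ _)).
by rewrite addrC lerD // distrC.
Qed.


Lemma int_bounds_of_dist (r c : rat) (k lo hi : int) :
  `|r - k%:~R| <= c -> (lo - 1)%:~R < r - c -> r + c < (hi + 1)%:~R -> lo <= k <= hi.
Proof.
rewrite ler_norml => /andP[lo_k k_hi] lo_lt hi_gt.
have : (lo - 1)%:~R < k%:~R :> rat by lra.
have : k%:~R < (hi + 1)%:~R :> rat by lra.
rewrite !ltr_int; lia.
Qed.

Lemma meets_range Gi Gj ri rj ai aj (lo hi : int) :
  in_slab Gi ri ai -> in_slab Gj rj aj ->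
  (lo - 1)%:~R < rj - ri - (ai + aj) -> rj - ri + (ai + aj) < (hi + 1)%:~R ->
  forall k, meets Gi Gj k -> lo <= k <= hi.
Proof.
move=> slab_i slab_j lo_lt hi_gt k /(meets_slab_dist slab_i slab_j) dist_k.
exact: int_bounds_of_dist dist_k lo_lt hi_gt.
Qed.



Lemma slab_gamma1 : in_slab gamma1 (3 / 2) (99 / 70).
Proof.
apply: (spinal_sphere_in_slab gamma1_Q).
- by rewrite oppr_eq0 oner_eq0.
- rewrite herm_col3 !(rmorphB, rmorphN) /= rmorph1 rmorph_nat conjC_omega.
  by ring: omega_sqr.
- have -> : (-1 - omega) / -1 = 1 + 1 * omega by field.
  rewrite Re_real_omega ?(rpred0, rpredV, rpredN, rpred1, rpred_nat) //.
  rewrite fmorph_div !rmorph_nat.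
  by field.
- lra.
- by apply: (two_div_norm_le (m := 1)); [rewrite normrN normr1 expr1n | lra].
Qed.

Lemma slab_gamma2 : in_slab gamma2 0 (99 / 70).
Proof.
apply: (spinal_sphere_in_slab gamma2_Q).
- by rewrite oppr_eq0 oner_eq0.
- by rewrite herm_col3 conjC0 !mul0r !mulr0 !addr0.
- by rewrite mul0r raddf0 rmorph0.
- lra.
- by apply: (two_div_norm_le (m := 1)); [rewrite normrN normr1 expr1n | lra].
Qed.

Lemma slab_gamma3 : in_slab gamma3 (1 / 4) (25 / 21).
Proof.
apply: (spinal_sphere_in_slab gamma3_Q).
- exact: omega_neq1.
- rewrite herm_col3 !(rmorphB, rmorphN) /= rmorph1 conjC_omega.
  by ring: omega_sqr.
- have -> : -1 / (omega - 1) = 0 + 2^-1 * omega.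
    by apply: (mulIf omega_neq1); rewrite divfK ?omega_neq1 //; field: omega_sqr.
  rewrite Re_real_omega ?(rpred0, rpredV, rpredN, rpred1, rpred_nat) //.
  rewrite fmorph_div !rmorph_nat.
  by field.
- lra.
- apply: (two_div_norm_le (m := 2)); last by lra.
  by rewrite normCK rmorphB /= conjC_omega rmorph1; ring: omega_sqr.
Qed.

Lemma slab_gamma4 : in_slab gamma4 (- (1 / 4)) (25 / 21).
Proof.
have omegaN_neq0 : - omega != 0 by rewrite oppr_eq0 omega_neq0.
apply: (spinal_sphere_in_slab gamma4_Q omegaN_neq0).
- rewrite herm_col3 !(rmorphB, rmorphN) /= rmorph1 conjC_omega.
  by ring: omega_sqr.
- have -> : 1 / - omega = - 2^-1 + 2^-1 * omega.
    by apply: (mulIf omegaN_neq0); rewrite divfK //; field: omega_sqr.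
  rewrite Re_real_omega ?(rpred0, rpredV, rpredN, rpred1, rpred_nat) //.
  rewrite rmorphN fmorph_div !rmorph_nat.
  by field.
- lra.
- apply: (two_div_norm_le (m := 2)); last by lra.
  by rewrite normrN normCK conjC_omega; ring: omega_sqr.
Qed.

Theorem proposition5p2 :
  (forall k : int, meets gamma1 gamma1 k -> (-2 <= k <= 2)%R) /\
  (forall k : int, meets gamma1 gamma2 k -> (-4 <= k <= 1)%R) /\
  (forall k : int, meets gamma1 gamma3 k -> (-3 <= k <= 1)%R) /\
  (forall k : int, meets gamma1 gamma4 k -> (-4 <= k <= 0)%R) /\
  (forall k : int, meets gamma2 gamma2 k -> (-2 <= k <= 2)%R) /\
  (forall k : int, meets gamma2 gamma3 k -> (-2 <= k <= 2)%R) /\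
  (forall k : int, meets gamma2 gamma4 k -> (-2 <= k <= 2)%R) /\
  (forall k : int, meets gamma3 gamma3 k -> (-2 <= k <= 2)%R) /\
  (forall k : int, meets gamma3 gamma4 k -> (-2 <= k <= 1)%R) /\
  (forall k : int, meets gamma4 gamma4 k -> (-2 <= k <= 2)%R).
Proof.
have S1 := slab_gamma1; have S2 := slab_gamma2.
have S3 := slab_gamma3; have S4 := slab_gamma4.
by do ![split | apply: meets_range; [eassumption | eassumption | lra | lra]].
Qed.
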